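(* If $\lambda,\mu\in\Xi$ are circuits in $\Lambda$ and $V_0\cap F_\lambda\cap F_\mu\neq\emptyset$, then $\lambda$ and $\mu$ are consistent, i.e. $\lambda_e\mu_e\ge0$ for all $e\in E$.
   Context: Let $\mathcal M$ be a regular matroid on a finite ground set $E$, represented by a totally unimodular matrix $M$; $\mathcal F=\ker M\subseteq\mathbb R^E$ with Euclidean inner product, $\Lambda=\ker M\cap\mathbb Z^E$, $V_0=\{x\in\mathcal F:\|x\|\le\|x-\mu\|\ \forall\mu\in\Lambda\}$. A nonzero flow is Eulerian if all coordinates lie in $\{-1,0,1\}$; a circuit in $\Lambda$ is an Eulerian flow whose support is a circuit (minimal dependent set of columns) of $\mathcal M$; $\Xi$ is the set of circuits in $\Lambda$. For $\gamma\in\Xi$, $F_\gamma=\{x\in\mathcal F:2\langle x,\gamma\rangle=\|\gamma\|^2\}$. *)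

From HB Require Import structures.
From mathcomp Require Import all_boot all_order all_algebra.
From mathcomp Require Import reals.
Set Implicit Arguments. Unset Strict Implicit. Unset Printing Implicit Defensive.
Import Order.TTheory GRing.Theory Num.Theory.
Local Open Scope ring_scope.

(* Ground set E = 'I_n; the matroid is represented by M : 'M[int]_(m, n). *)

(* Total unimodularity: every square submatrix has determinant in {-1,0,1}.
   (Submatrices are given by arbitrary row/column selections; non-injective
   selections give determinant 0, reorderings only change the sign.) *)
Definition totally_unimodular (m n : nat) (M : 'M[int]_(m, n)) : Prop :=
  forall (k : nat) (f : 'I_k -> 'I_m) (g : 'I_k -> 'I_n),
    \det (mxsub f g M) \in [:: -1; 0; 1].

Definition realM (R : realType) (m n : nat) (M : 'M[int]_(m, n)) : 'M[R]_(m, n) :=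
  map_mx (fun z : int => z%:~R) M.

Definition inF (R : realType) (m n : nat) (M : 'M[int]_(m, n)) (x : 'cV[R]_n) : Prop :=
  realM R M *m x = 0.

Definition inLambda (m n : nat) (M : 'M[int]_(m, n)) (z : 'cV[int]_n) : Prop :=
  M *m z = 0.

Definition toR (R : realType) (n : nat) (z : 'cV[int]_n) : 'cV[R]_n :=
  map_mx (fun a : int => a%:~R) z.

Definition dotR (R : realType) (n : nat) (x y : 'cV[R]_n) : R :=
  \sum_(i < n) x i 0 * y i 0.
Definition normR (R : realType) (n : nat) (x : 'cV[R]_n) : R :=
  Num.sqrt (dotR x x).

Definition inV0 (R : realType) (m n : nat) (M : 'M[int]_(m, n)) (x : 'cV[R]_n) : Prop :=
  inF M x /\ forall mu : 'cV[int]_n, inLambda M mu -> normR x <= normR (x - toR R mu).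

Definition dependent (R : realType) (m n : nat) (M : 'M[int]_(m, n)) (S : {set 'I_n}) : Prop :=
  exists c : 'cV[R]_n, c != 0 /\ (forall i, i \notin S -> c i 0 = 0) /\ realM R M *m c = 0.

Definition matroid_circuit (R : realType) (m n : nat) (M : 'M[int]_(m, n)) (S : {set 'I_n}) : Prop :=
  dependent R M S /\ forall T : {set 'I_n}, T \proper S -> ~ dependent R M T.

Definition support (n : nat) (z : 'cV[int]_n) : {set 'I_n} := [set i | z i 0 != 0].

Definition eulerian (m n : nat) (M : 'M[int]_(m, n)) (z : 'cV[int]_n) : Prop :=
  inLambda M z /\ z != 0 /\ forall i, z i 0 \in [:: -1; 0; 1].

Definition inXi (R : realType) (m n : nat) (M : 'M[int]_(m, n)) (z : 'cV[int]_n) : Prop :=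
  eulerian M z /\ matroid_circuit R M (support z).

Definition inFgamma (R : realType) (m n : nat) (M : 'M[int]_(m, n)) (g : 'cV[int]_n)
  (x : 'cV[R]_n) : Prop :=
  inF M x /\ 2 * dotR x (toR R g) = normR (toR R g) ^+ 2.

(* A point x of the Voronoi cell satisfies 2<x,mu> <= |mu|^2 for every mu in the
   lattice, and |g|^2 = |g|_1 for an Eulerian flow g.  Total unimodularity makes
   every nonzero lattice vector z dominate, sign by sign, an Eulerian flow: an
   elementary kernel vector conformal to z has all nonzero entries of equal
   absolute value by Cramer's rule.  Peeling such flows off z gives
   2<x,z> <= |z|_1 on the whole lattice.  On F_lam and F_mu this yields
   |lam|_1 + |mu|_1 = 2<x,lam+mu> <= |lam+mu|_1, so lam and mu never cancel. *)

From Pilot Require Import Defs.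
From HB Require Import structures.
From mathcomp Require Import all_boot all_order all_algebra.
From mathcomp Require Import reals.
From mathcomp Require Import ring zify.
From Stdlib Require Import Classical.
Import Order.TTheory GRing.Theory Num.Theory.
Set Implicit Arguments. Unset Strict Implicit. Unset Printing Implicit Defensive.
Local Open Scope ring_scope.

Local Notation signs := [:: -1; 0; 1].

Lemma mem_signsN (R : pzRingType) (a : R) : a \in signs -> - a \in signs.
Proof. by rewrite !inE => /or3P[]/eqP->; rewrite ?opprK ?oppr0 eqxx ?orbT. Qed.

Lemma mem_signsM (R : pzRingType) (a b : R) : a \in signs -> b \in signs -> a * b \in signs.
Proof.
rewrite !inE => /or3P[]/eqP-> /or3P[]/eqP->;
  by rewrite ?(mulr0, mul0r, mulr1, mul1r, mulrNN) eqxx ?orbT.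
Qed.

Lemma mem_signsV (R : unitRingType) (a : R) : a \in signs -> a^-1 \in signs.
Proof. by rewrite !inE => /or3P[]/eqP->; rewrite ?invrN1 ?invr0 ?invr1 eqxx ?orbT. Qed.

Lemma sgr_signs (R : numDomainType) (r : R) : r \in signs -> Num.sg r = r.
Proof. by rewrite !inE => /or3P[]/eqP->; rewrite ?sgrN1 ?sgr0 ?sgr1. Qed.

Definition supp (R : zmodType) n (v : 'cV[R]_n) : {set 'I_n} := [set e | v e 0 != 0].

Definition conformal (R : numDomainType) n (y z : 'cV[R]_n) : Prop :=
  forall e, y e 0 != 0 -> 0 < y e 0 * z e 0.

Section Conformal.
Variables (R : realDomainType) (n : nat).
Implicit Types y z w : 'cV[R]_n.

Lemma conformal_refl y : conformal y y.
Proof. by move=> e ye; rewrite -expr2 exprn_even_gt0. Qed.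

Lemma conformal_trans y z w : conformal y z -> conformal z w -> conformal y w.
Proof.
move=> yz zw e ye; have yze := yz e ye.
have ze : z e 0 != 0 by apply: contraTneq yze => ->; rewrite mulr0 ltxx.
have zwe := zw e ze.
have [zn|zp|z0] := ltrgtP (z e 0) 0; last by rewrite z0 eqxx in ze.
- by move: yze zwe; rewrite nmulr_lgt0 // nmulr_rgt0 // => /nmulr_rgt0 ->.
- by move: yze zwe; rewrite pmulr_lgt0 // pmulr_rgt0 //; apply: mulr_gt0.
Qed.

End Conformal.

Section Elementary.
Variables (R : realFieldType) (m n : nat) (A : 'M[R]_(m, n)).
Implicit Types y z w : 'cV[R]_n.

(* Equivalently, a nonzero kernel vector of minimal support. *)
Definition elementary y : Prop :=
  [/\ y != 0, A *m y = 0 &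
      forall w, A *m w = 0 -> supp w \subset supp y -> exists t, w = t *: y].

(* Subtract from [y] the multiple of [w] that first kills a coordinate of [y]:
   minimising [|y e / w e|] keeps every surviving coordinate on its side of 0. *)
Lemma conformal_reduction y w :
  supp w \subset supp y -> (forall t, w != t *: y) ->
  exists t, [/\ y - t *: w != 0, conformal (y - t *: w) y &
                supp (y - t *: w) \proper supp y].
Proof.
move=> /subsetP wy wNy.
have [e1 we1] : exists e1, w e1 0 != 0 by apply/cV0Pn; rewrite -(scale0r y) wNy.
have ysupp e : w e 0 != 0 -> y e 0 != 0.
  by move=> we; have := wy e; rewrite !inE; apply.
pose r e := y e 0 / w e 0.
have rE e : w e 0 != 0 -> y e 0 = r e * w e 0 by move=> we; rewrite mulfVK.
have [es wes esmin] := @arg_minP _ _ _ e1 (fun e => w e 0 != 0) (fun e => `|r e|) we1.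
pose t := r es; pose u := y - t *: w.
have uE e : u e 0 = y e 0 - t * w e 0 by rewrite !mxE.
have uy_ge0 e : 0 <= u e 0 * y e 0.
  have [we0|we] := eqVneq (w e 0) 0.
    by rewrite uE we0 mulr0 subr0 -expr2 sqr_ge0.
  have tr : t * r e <= r e * r e.
    rewrite (le_trans (ler_norm _)) // normrM.
    rewrite -expr2 -(real_normK (num_real (r e))) expr2.
    by rewrite ler_wpM2r // esmin.
  rewrite uE rE // -mulrBl mulrACA -expr2 mulr_ge0 ?sqr_ge0 //.
  by rewrite mulrBl subr_ge0.
have uy e : u e 0 != 0 -> y e 0 != 0.
  apply: contraNneq => ye; rewrite uE ye.
  have [->|/ysupp] := eqVneq (w e 0) 0; first by rewrite mulr0 subr0.
  by rewrite ye eqxx.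
have yes : y es 0 != 0 := ysupp _ wes.
have ues : u es 0 = 0 by rewrite uE [y es 0]rE // subrr.
exists t; split.
- apply: contraNneq (wNy t^-1) => /eqP; rewrite subr_eq0 => /eqP ->.
  have t0 : t != 0 by apply: contraNneq yes; rewrite rE // -/t => ->; rewrite mul0r.
  by rewrite scalerA mulVf // scale1r.
- by move=> e ue; rewrite lt_def mulf_neq0 ?uy ?uy_ge0.
- apply/properP; split; first by apply/subsetP => e; rewrite !inE; apply: uy.
  by exists es; rewrite !inE ?yes // ues eqxx.
Qed.

Lemma exists_conformal_elementary z :
  z != 0 -> A *m z = 0 -> exists y, elementary y /\ conformal y z.
Proof.
have [N] := ubnP #|supp z|; elim: N z => // N IH z ltzN z0 Az.
have [elz|nelz] := classic (elementary z).
  by exists z; split=> //; apply: conformal_refl.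
have [w [Aw wz wNz]] : exists w, [/\ A *m w = 0, supp w \subset supp z &
                                   forall t, w != t *: z].
  apply: NNPP => nw; apply: nelz; split=> // w Aw wz.
  apply: NNPP => nt; apply: nw; exists w; split=> // t; apply/eqP => wt.
  by apply: nt; exists t.
have [t [u0 uz /proper_card ltuz]] := conformal_reduction wz wNz.
have Au : A *m (z - t *: w) = 0 by rewrite mulmxBr -scalemxAr Aw scaler0 Az subr0.
have [y [ely yu]] := IH _ (leq_trans ltuz ltzN) u0 Au.
by exists y; split=> //; apply: conformal_trans uz.
Qed.

Lemma elementary_colsub_row_full y (e0 : 'I_n) k (g : 'I_k -> 'I_n) :
  elementary y -> y e0 0 != 0 -> injective g -> (forall j, g j \in supp y :\ e0) ->
  row_full (colsub g A).
Proof.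
move=> [_ _ ely] ye0 ginj gS; rewrite /row_full -mxrank_tr.
apply: inj_row_free => a aA.
pose w : 'cV[R]_n := colsub g 1%:M *m a^T.
have wE e : w e 0 = \sum_j (e == g j)%:R * a 0 j.
  by rewrite mxE; apply: eq_bigr => j _; rewrite !mxE.
have wg j : w (g j) 0 = a 0 j.
  rewrite wE (bigD1 j) //= eqxx mul1r big1 ?addr0 // => i ij.
  by rewrite (inj_eq ginj) eq_sym (negbTE ij) mul0r.
have Aw : A *m w = 0.
  by rewrite mulmxA mulmx_colsub mulmx1 -[colsub g A]trmxK -trmx_mul aA trmx0.
have wy : supp w \subset supp y.
  apply/subsetP => e; rewrite !inE wE; apply: contraNneq => ye.
  rewrite big1 // => j _; move: (gS j); rewrite !inE => /andP[_].
  by have [<-|_] := eqVneq e (g j); rewrite ?ye ?eqxx // mul0r.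
have [t wt] := ely w Aw wy.
have we0 : w e0 0 = 0.
  rewrite wE big1 // => j _; move: (gS j); rewrite !inE => /andP[].
  by have [<-|_] := eqVneq e0 (g j); rewrite ?eqxx // mul0r.
have t0 : t = 0.
  by move: we0; rewrite wt mxE => /eqP; rewrite mulf_eq0 (negbTE ye0) orbF => /eqP.
by apply/rowP => j; rewrite -wg wt t0 scale0r !mxE.
Qed.

End Elementary.

Section TotallyUnimodular.
Variables (R : realType) (m n : nat) (M : 'M[int]_(m, n)).
Hypothesis HM : totally_unimodular M.
Local Notation MR := (Defs.realM R M).

Lemma tu_det_realM k (f : 'I_k -> 'I_m) (g : 'I_k -> 'I_n) :
  \det (mxsub f g MR) \in signs.
Proof.
rewrite /Defs.realM -map_mxsub det_map_mx.
move: (HM f g); rewrite !inE => /or3P[]/eqP->;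
  by rewrite ?rmorphN1 ?rmorph0 ?rmorph1 eqxx ?orbT.
Qed.

(* Cramer's rule: [v j] is a ratio of two minors of [M]. *)
Lemma tu_cramer k (f : 'I_k -> 'I_m) (g : 'I_k -> 'I_n) (e0 : 'I_n) (v : 'cV[R]_k) :
  mxsub f g MR \in unitmx -> mxsub f g MR *m v = \col_i MR (f i) e0 ->
  forall j, v j 0 \in signs.
Proof.
move=> Bu Bv j; set B := mxsub f g MR in Bu Bv *.
pose gj i := if i == j then e0 else g i.
have detBj : \det (mxsub f gj MR) = (\adj B *m \col_i MR (f i) e0) j 0.
  rewrite mxE (expand_det_col _ j); apply: eq_bigr => i _.
  rewrite !mxE /gj eqxx mulrC; congr (_ * _); rewrite /cofactor; congr (_ * \det _).
  by apply/matrixP => a b; rewrite !mxE eq_sym (negbTE (neq_lift _ _)).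
have -> : v = invmx B *m \col_i MR (f i) e0 by rewrite -Bv mulKmx.
rewrite /invmx Bu -scalemxAl mxE -detBj.
by apply: mem_signsM; [apply/mem_signsV/tu_det_realM | apply: tu_det_realM].
Qed.

Lemma tu_elementary_ratio (y : 'cV[R]_n) (e0 e : 'I_n) :
  elementary MR y -> y e0 0 != 0 -> y e 0 / y e0 0 \in signs.
Proof.
move=> ely ye0.
have [->|ye] := eqVneq (y e 0) 0; first by rewrite mul0r !inE eqxx orbT.
have [->|ne] := eqVneq e e0; first by rewrite divff // !inE eqxx !orbT.
pose S := supp y :\ e0.
have eS : e \in S by rewrite !inE ne ye.
pose g (j : 'I_#|S|) : 'I_n := enum_val j.
have rf := elementary_colsub_row_full ely ye0
  (@enum_val_inj _ (mem S)) (@enum_valP _ (mem S)).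
pose f := fullrankfun rf.
have BE : rowsub f (colsub g MR) = mxsub f g MR by apply/matrixP => i j; rewrite !mxE.
pose v : 'cV[R]_#|S| := \col_j (- y (g j) 0 / y e0 0).
have Bv : mxsub f g MR *m v = \col_i MR (f i) e0.
  have [_ My _] := ely.
  apply/colP => i; rewrite !mxE.
  have := congr1 (fun X : 'cV[R]_m => X (f i) 0) My; rewrite !mxE.
  rewrite (bigD1 e0) //= (bigID (mem S)) /= [X in _ + (_ + X)]big1; last first.
    by move=> e' /andP[e'0]; rewrite !inE e'0 /= negbK => /eqP->; rewrite mulr0.
  rewrite addr0 (eq_bigl (mem S)) => [|e']; last by rewrite !inE; case: eqP.
  rewrite big_enum_val /= addrC => /eqP; rewrite addr_eq0 => /eqP yg.
  rewrite !mxE in yg; apply: (mulIf ye0); rewrite -[RHS]opprK -yg mulr_suml -sumrN.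
  by apply: eq_bigr => j _; rewrite !mxE -mulrA mulfVK // mulrN.
have j0P : g (enum_rank_in eS e) = e by rewrite /g enum_rankK_in.
have := @tu_cramer _ f g e0 v _ Bv (enum_rank_in eS e).
rewrite -BE fullrowsub_unit mxE j0P mulNr => /(_ isT) /mem_signsN.
by rewrite opprK.
Qed.

End TotallyUnimodular.

Lemma absz_sub_sign (g z : int) : g \in signs -> (g != 0 -> 0 < g * z) ->
  `|z|%N = (`|(z - g)%R| + `|g|)%N.
Proof. by rewrite !inE => /or3P[]/eqP-> gz; [move: (gz isT) | | move: (gz isT)]; lia. Qed.

Section Lattice.
Variables (R : realType) (n : nat).
Implicit Types (a b g z : 'cV[int]_n) (x : 'cV[R]_n).

Lemma toR_inj : injective (@toR R n).
Proof.
by move=> a b /matrixP ab; apply/matrixP => i j; have := ab i j; rewrite !mxE => /intr_inj.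
Qed.

Lemma toRD a b : toR R (a + b) = toR R a + toR R b.
Proof. by apply/matrixP => i j; rewrite !mxE rmorphD. Qed.

Lemma realM_mul_toR m (M : 'M[int]_(m, n)) z :
  Defs.realM R M *m toR R z = toR R (M *m z).
Proof. by rewrite /Defs.realM /toR -map_mxM. Qed.

Lemma dotR_ge0 x : 0 <= dotR x x.
Proof. by apply: sumr_ge0 => i _; rewrite -expr2 sqr_ge0. Qed.

Lemma normR_sqr x : normR x ^+ 2 = dotR x x.
Proof. by rewrite sqr_sqrtr ?dotR_ge0. Qed.

Lemma dotRDr x y w : dotR x (y + w) = dotR x y + dotR x w.
Proof. by rewrite /dotR -big_split; apply: eq_bigr => i _; rewrite mxE mulrDr. Qed.

Lemma dotR_sqrB x y : dotR (x - y) (x - y) = dotR x x - 2 * dotR x y + dotR y y.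
Proof.
rewrite /dotR mulr_sumr -sumrB -big_split; apply: eq_bigr => i _.
by rewrite !mxE /=; ring.
Qed.

Definition l1norm z : nat := (\sum_(e < n) `|z e 0%R|)%N.

Lemma dotR_toR_signs g : (forall e, g e 0 \in signs) ->
  dotR (toR R g) (toR R g) = (l1norm g)%:R.
Proof.
move=> gs; rewrite /dotR /l1norm natr_sum; apply: eq_bigr => e _; rewrite !mxE.
by move: (gs e); rewrite !inE => /or3P[]/eqP->; rewrite ?mulr0 ?mulrNN ?mulr1.
Qed.

Lemma l1norm_sub_conformal g z : (forall e, g e 0 \in signs) -> conformal g z ->
  l1norm z = (l1norm (z - g) + l1norm g)%N.
Proof.
move=> gs gz; rewrite /l1norm -big_split; apply: eq_bigr => e _; rewrite !mxE /=.
exact: absz_sub_sign (gs e) (gz e).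
Qed.

Lemma l1norm_gt0 z : z != 0 -> (0 < l1norm z)%N.
Proof.
by case/cV0Pn => e ze; rewrite /l1norm (bigD1 e) //= addn_gt0 absz_gt0 ze.
Qed.

(* Additivity of the l1-norm on [a + b] forces it in every coordinate. *)
Lemma l1norm_add_ge_mul_ge0 a b : (l1norm a + l1norm b <= l1norm (a + b))%N ->
  forall e, 0 <= a e 0 * b e 0.
Proof.
move=> lab e; rewrite leNgt; apply/negP => abe.
have lt_e : (`|(a + b)%R e 0%R| < `|a e 0%R| + `|b e 0%R|)%N.
  by rewrite mxE /=; nia.
have le_i i : (`|(a + b)%R i 0%R| <= `|a i 0%R| + `|b i 0%R|)%N.
  by rewrite mxE /=; lia.
move: lab; apply/negP; rewrite -ltnNge /l1norm -big_split /= (bigD1 e) //=.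
rewrite [X in (_ < X)%N](bigD1 e) //=.
by rewrite -addSn leq_add // leq_sum.
Qed.

End Lattice.

Section Voronoi.
Variables (R : realType) (m n : nat) (M : 'M[int]_(m, n)).
Hypothesis HM : totally_unimodular M.
Local Notation MR := (Defs.realM R M).

(* Rescaling an elementary kernel vector [y] by [|y e0|] gives, by
   [tu_elementary_ratio], the real image of its sign vector. *)
Lemma exists_conformal_eulerian z :
  inLambda M z -> z != 0 -> exists g, eulerian M g /\ conformal g z.
Proof.
move=> Mz z0.
have Mz' : MR *m toR R z = 0 by rewrite realM_mul_toR Mz /toR map_mx0.
have z0' : toR R z != 0.
  by apply: contraNneq z0 => zR; apply/eqP/(@toR_inj R); rewrite zR /toR map_mx0.
have [y [ely yz]] := exists_conformal_elementary z0' Mz'.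
have [y_neq0 My _] := ely; have [e0 ye0] := cV0Pn _ y_neq0.
pose g := \col_e sgz (y e 0).
have gR : toR R g = `|y e0 0|^-1 *: y.
  apply/colP => e; rewrite !mxE -sgrEz.
  have ratio := tu_elementary_ratio HM e ely ye0.
  rewrite -[y e 0](mulfVK ye0) sgrM sgr_signs // mulrCA; congr (_ * _).
  by rewrite mulrC [X in X / _]numEsg mulfK ?normr_eq0.
exists g; split; first (split; [|split]).
- apply: (@toR_inj R).
  by rewrite /inLambda -realM_mul_toR gR -scalemxAr My scaler0 /toR map_mx0.
- by apply/cV0Pn; exists e0; rewrite mxE sgz_eq0.
- by move=> e; rewrite mxE; case: sgzP; rewrite !inE eqxx ?orbT.
- move=> e; rewrite mxE sgz_eq0 => ye; rewrite -(ltr0z R) rmorphM /= -sgrEz.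
  have := yz e ye; rewrite mxE {1}[y e 0]numEsg mulrAC.
  by rewrite pmulr_lgt0 ?normr_gt0.
Qed.

Lemma inV0_dotR_le x mu : inV0 M x -> inLambda M mu ->
  2 * dotR x (toR R mu) <= dotR (toR R mu) (toR R mu).
Proof.
move=> [_ Vx] Lmu; have := Vx mu Lmu.
by rewrite /normR ler_sqrt ?dotR_ge0 // dotR_sqrB -addrA lerDl addrC subr_ge0.
Qed.

(* Peel off conformal Eulerian flows, each of which obeys [inV0_dotR_le]. *)
Lemma inV0_dotR_le_l1norm x z : inV0 M x -> inLambda M z ->
  2 * dotR x (toR R z) <= (l1norm z)%:R.
Proof.
move=> Vx; have [N] := ubnP (l1norm z); elim: N z => // N IH z ltzN Lz.
have [->|z0] := eqVneq z 0.
  by rewrite /dotR big1 ?mulr0 ?ler0n // => i _; rewrite !mxE mulr0.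
have [g [[Lg [g0 gs]] gz]] := exists_conformal_eulerian Lz z0.
have Lzg : inLambda M (z - g) by rewrite /inLambda mulmxBr Lz Lg subr0.
have l1z := l1norm_sub_conformal gs gz.
have lt_zg : (l1norm (z - g) < l1norm z)%N.
  by rewrite l1z -[X in (X < _)%N]addn0 ltn_add2l l1norm_gt0.
rewrite l1z natrD -[z in toR R z](subrK g) toRD dotRDr mulrDr lerD //.
- by apply: IH Lzg; rewrite -ltnS (leq_ltn_trans lt_zg).
- by rewrite -dotR_toR_signs //; apply: inV0_dotR_le.
Qed.

End Voronoi.

Theorem mainTheorem12 (R : realType) (m n : nat) (M : 'M[int]_(m, n))
  (HM : totally_unimodular M) (lam mu : 'cV[int]_n)
  (Hlam : inXi R M lam) (Hmu : inXi R M mu)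
  (Hne : exists x : 'cV[R]_n, inV0 M x /\ inFgamma M lam x /\ inFgamma M mu x) :
  forall e : 'I_n, 0 <= lam e 0 * mu e 0.
Proof.
have [x [Vx [[_ Flam] [_ Fmu]]]] := Hne.
have [[Llam [_ lams]] _] := Hlam; have [[Lmu [_ mus]] _] := Hmu.
have Lsum : inLambda M (lam + mu) by rewrite /inLambda mulmxDr Llam Lmu addr0.
apply: l1norm_add_ge_mul_ge0; rewrite -(ler_nat R) natrD.
rewrite -(dotR_toR_signs R lams) -(dotR_toR_signs R mus) -!normR_sqr -Flam -Fmu.
rewrite -mulrDr -dotRDr -toRD.
exact: inV0_dotR_le_l1norm Vx Lsum.
Qed.
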